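(* Let $X$ be a path-connected topological space, $a,b\in X$ with $a\neq b$, $G$ a group, and $p$ a path from $b$ to $a$. For $z\in Z^1(X,b)$, the cohomology class in $H^1(X,\{a,b\})$ of the cocycle $\varepsilon_p(z)\bullet z$ depends only on $p$ and on the cohomology class of $z$ in $H^1(X,b)$.
   Context: Conventions: a path in $W$ is a continuous map $[0,1]\to W$; $P(W)$ is the set of paths; $p\cdot q$ is concatenation; homotopies of paths are relative to $\{0,1\}$. $G$ has unit $1$. For $Y\subset W$: a $0$-cochain of $(W,Y)$ is a map $c\colon W\to G$ with $c|_Y=1$, and these form a group $C^0(W,Y)$ under pointwise multiplication; more generally any map $c\colon W\to G$ acts on maps $u\colon P(W)\to G$ by $(c\bullet u)(p)=c(p(0))u(p)c(p(1))^{-1}$. A $1$-cochain of $(W,Y)$ is $u\colon P(W)\to G$ with $u(p)=1$ for paths with image in $Y$; a cocycle additionally satisfies $u(p)=u(q)$ for homotopic $p,q$ and $u(p\cdot q)=u(p)u(q)$ when defined; $Z^1(W,Y)$ is the set of cocycles and $H^1(W,Y)$ the set of $C^0(W,Y)$-orbits. $(W,b)$ abbreviates $(W,\{b\})$. $G_a\subset C^0(X,b)$ is the subgroup of $0$-cochains equal to $1$ on $X\setminus\{a\}$, identified with $G$ via the value at $a$. For $z\in Z^1(X,b)$, $\varepsilon_p(z)\in G_a$ is the element with value $z(p)$ at $a$. (Since $\{a,b\}$ is discrete, $\varepsilon_p(z)\bullet z\in Z^1(X,\{a,b\})$.) *)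

From HB Require Import structures.
From mathcomp Require Import all_boot all_algebra.
From mathcomp Require Import all_classical all_reals topology.
From mathcomp Require Import Rstruct Rstruct_topology.

Set Implicit Arguments.
Unset Strict Implicit.
Unset Printing Implicit Defensive.

From mathcomp Require Import order.
Import Order.TTheory GRing.Theory Num.Theory.
Local Open Scope classical_set_scope.
Local Open Scope ring_scope.

Definition I01 : topologicalType := set_type (`[0, 1]%classic : set Rdefinitions.R).

Lemma zero_in01 : (0 : Rdefinitions.R) \in (`[0, 1]%classic : set Rdefinitions.R).
Proof. by rewrite inE /= in_itv /= lexx ler01. Qed.
Lemma one_in01 : (1 : Rdefinitions.R) \in (`[0, 1]%classic : set Rdefinitions.R).
Proof. by rewrite inE /= in_itv /= lexx ler01. Qed.

Definition i0 : I01 := exist _ 0 zero_in01.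
Definition i1 : I01 := exist _ 1 one_in01.

Record tpath (W : topologicalType) := TPath {
  pfun :> I01 -> W;
  pcont : continuous pfun }.

Definition is_concat (W : topologicalType) (p q r : tpath W) : Prop :=
  p i1 = q i0 /\
  forall t : I01,
    (sval t <= 1/2 -> forall s : I01, sval s = 2 * sval t -> r t = p s) /\
    (1/2 <= sval t -> forall s : I01, sval s = 2 * sval t - 1 -> r t = q s).

Definition path_homotopic (W : topologicalType) (p q : tpath W) : Prop :=
  exists H : I01 * I01 -> W,
    continuous H /\
    (forall s, H (s, i0) = p s) /\ (forall s, H (s, i1) = q s) /\
    (forall t, H (i0, t) = p i0) /\ (forall t, H (i1, t) = p i1).

Definition path_connected (W : topologicalType) : Prop :=
  forall x y : W, exists p : tpath W, p i0 = x /\ p i1 = y.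

Local Open Scope group_scope.

Definition cochain0 (W : topologicalType) (G : groupType) (Y : set W)
  (c : W -> G) : Prop := forall y, Y y -> c y = 1.

Definition cact (W : topologicalType) (G : groupType) (c : W -> G)
  (u : tpath W -> G) : tpath W -> G :=
  fun p => c (p i0) * u p * (c (p i1))^-1.

Definition cochain1 (W : topologicalType) (G : groupType) (Y : set W)
  (u : tpath W -> G) : Prop :=
  forall p : tpath W, (forall t, Y (p t)) -> u p = 1.

Definition cocycle1 (W : topologicalType) (G : groupType) (Y : set W)
  (u : tpath W -> G) : Prop :=
  cochain1 Y u /\
  (forall p q : tpath W, path_homotopic p q -> u p = u q) /\
  (forall p q r : tpath W, is_concat p q r -> u r = u p * u q).

(* Two maps P(W) -> G lie in the same C^0(W,Y)-orbit, i.e. (for cocycles)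
   define the same class in H^1(W,Y). *)
Definition cohomologous (W : topologicalType) (G : groupType) (Y : set W)
  (u v : tpath W -> G) : Prop :=
  exists c : W -> G, cochain0 Y c /\ v = cact c u.

Definition eps (X : topologicalType) (G : groupType) (a : X)
  (p : tpath X) (z : tpath X -> G) : X -> G :=
  fun x => if x == a then z p else 1.

From HB Require Import structures.
From mathcomp Require Import all_boot all_algebra.
From mathcomp Require Import all_classical all_reals topology.
From mathcomp Require Import Rstruct Rstruct_topology.
Local Open Scope classical_set_scope.

(* Write z' = c . z with c(b) = 1.  The action of maps X -> G composes
   pointwise, so eps_p(z') . z' = (eps_p(z') c eps_p(z)^-1) . (eps_p(z) . z).
   The twisting map is 1 at b because a <> b, and 1 at a because
   z'(p) = c(b) z(p) c(a)^-1 = z(p) c(a)^-1. *)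

Local Open Scope group_scope.

Section CochainAction.
Variables (W : topologicalType) (G : groupType).
Implicit Types (c d e f : W -> G) (u : tpath W -> G).

Lemma cactM c d u : cact c (cact d u) = cact (fun x => c x * d x) u.
Proof. by apply/funext => q; rewrite /cact invgM !mulgA. Qed.

Lemma cact_twist e f c u :
  cact f (cact c u) = cact (fun x => f x * c x * (e x)^-1) (cact e u).
Proof. by rewrite !cactM; congr cact; apply/funext => x; rewrite mulgVK. Qed.

Lemma cohomologous_cact_twist (Y : set W) e f c u :
  cochain0 Y (fun x => f x * c x * (e x)^-1) ->
  cohomologous Y (cact e u) (cact f (cact c u)).
Proof. by move=> hY; exists (fun x => f x * c x * (e x)^-1); rewrite -cact_twist. Qed.

End CochainAction.

Section EpsilonTwist.
Variables (X : topologicalType) (G : groupType) (a b : X).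
Variables (p : tpath X) (z : tpath X -> G) (c : X -> G).
Hypotheses (hp0 : p i0 = b) (hp1 : p i1 = a) (cb : c b = 1).

Lemma eps_cact_at : eps a p (cact c z) a = z p * (c a)^-1.
Proof. by rewrite /eps eqxx /cact hp0 hp1 cb mul1g. Qed.

Lemma eps_twist_cochain0 : a <> b ->
  cochain0 [set a; b] (fun x => eps a p (cact c z) x * c x * (eps a p z x)^-1).
Proof.
move=> hab y [->|->].
- by rewrite eps_cact_at /eps eqxx mulgVK mulgV.
- have /negbTE nba : b != a by apply/eqP => hba; apply: hab.
  by rewrite /eps nba cb !mul1g invg1.
Qed.

End EpsilonTwist.

Theorem lemma6p1 (X : topologicalType) (a b : X) (G : groupType)
  (hX : path_connected X) (hab : a <> b)
  (p : tpath X) (hp0 : p i0 = b) (hp1 : p i1 = a)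
  (z z' : tpath X -> G)
  (hz : cocycle1 [set b] z) (hz' : cocycle1 [set b] z')
  (hzz' : cohomologous [set b] z z') :
  cohomologous [set a; b] (cact (eps a p z) z) (cact (eps a p z') z').
Proof.
case: hzz' => c [hc ->].
apply: cohomologous_cact_twist.
by apply: eps_twist_cochain0 => //; apply: hc.
Qed.
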